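(* If $t\neq\pm2$ and $n$ are integers, then $h(t)=\left|\coprod_{j=0}^{11}X_{t,n+j}\right|$, where $h(t)$ is the number of equivalence classes of integral binary quadratic forms of discriminant $t^2-4$.
   Context: An integral binary quadratic form is $ax^2+bxy+cy^2$ with $a,b,c\in\mathbb{Z}$, of discriminant $b^2-4ac$; two forms are equivalent if they lie in the same orbit of the $\mathrm{SL}_2(\mathbb{Z})$-action $\left(\begin{bmatrix}\alpha&\beta\\ \gamma&\delta\end{bmatrix}\cdot f\right)(x,y)=f(\alpha x+\beta y,\gamma x+\delta y)$. $B_3=\langle\sigma_1,\sigma_2:\sigma_1\sigma_2\sigma_1=\sigma_2\sigma_1\sigma_2\rangle$; $\phi:B_3\to\mathrm{SL}_2(\mathbb{Z})$ is given by $\phi(\sigma_1)=\begin{bmatrix}1&1\\0&1\end{bmatrix}$, $\phi(\sigma_2)=\begin{bmatrix}1&0\\-1&1\end{bmatrix}$; $\epsilon:B_3\to\mathbb{Z}$ is the exponent sum. $X_{t,n}$ is the set of conjugacy classes of $g\in B_3$ with $\mathrm{tr}(\phi(g))=t$ and $\epsilon(g)=n$. *)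

From mathcomp Require Import all_boot all_order all_algebra.
Set Implicit Arguments. Unset Strict Implicit. Unset Printing Implicit Defensive.
Import Order.TTheory GRing.Theory Num.Theory.
Local Open Scope ring_scope.

(** ** Integral binary quadratic forms  a x^2 + b x y + c y^2 *)
Definition qform := (int * int * int)%type.
Definition qa (f : qform) : int := f.1.1.
Definition qb (f : qform) : int := f.1.2.
Definition qc (f : qform) : int := f.2.

Definition disc (f : qform) : int := qb f ^+ 2 - 4 * qa f * qc f.

(** ([[al be];[ga de]] . f)(x,y) = f(al x + be y, ga x + de y), coefficients *)
Definition qact (al be ga de : int) (f : qform) : qform :=
  let a := qa f in let b := qb f in let c := qc f in
  (a * al ^+ 2 + b * al * ga + c * ga ^+ 2,
   2 * a * al * be + b * (al * de + be * ga) + 2 * c * ga * de,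
   a * be ^+ 2 + b * be * de + c * de ^+ 2).

Definition form_equiv (f g : qform) : Prop :=
  exists al be ga de : int, al * de - be * ga = 1 /\ qact al be ga de f = g.

(** A letter (g, e): g = false is sigma_1, g = true is sigma_2;
    e = true means the inverse letter. *)
Definition letter := (bool * bool)%type.
Definition word := seq letter.

Definition s1 : letter := (false, false).
Definition s2 : letter := (true, false).

Definition linv (l : letter) : letter := (l.1, ~~ l.2).
Definition winv (w : word) : word := rev (map linv w).

Inductive braid_eq : word -> word -> Prop :=
| beq_refl w : braid_eq w w
| beq_sym u v : braid_eq u v -> braid_eq v u
| beq_trans u v w : braid_eq u v -> braid_eq v w -> braid_eq u w
| beq_ctx a b u v : braid_eq u v -> braid_eq (a ++ u ++ b) (a ++ v ++ b)
| beq_cancel l : braid_eq [:: l; linv l] [::]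
| beq_braid : braid_eq [:: s1; s2; s1] [:: s2; s1; s2].

Definition braid_conj (w w' : word) : Prop :=
  exists u : word, braid_eq (u ++ w ++ winv u) w'.

Definition mx2 (a b c d : int) : 'M[int]_2 :=
  \matrix_(i < 2, j < 2)
    if (i == 0 :> nat) then (if (j == 0 :> nat) then a else b)
    else (if (j == 0 :> nat) then c else d).

Definition phi_letter (l : letter) : 'M[int]_2 :=
  match l with
  | (false, false) => mx2 1 1 0 1
  | (false, true) => mx2 1 (-1) 0 1
  | (true, false) => mx2 1 0 (-1) 1
  | (true, true) => mx2 1 0 1 1
  end.

Definition phi (w : word) : 'M[int]_2 :=
  foldr (fun l M => phi_letter l *m M) 1%:M w.

Definition eps (w : word) : int :=
  \sum_(l <- w) (if l.2 then -1 else 1).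

(** elements whose conjugacy classes form X_{t,n} *)
Definition Xpred (t n : int) (w : word) : Prop :=
  \tr (phi w) = t /\ eps w = n.

Definition num_classes (T : Type) (P : T -> Prop) (R : T -> T -> Prop)
    (k : nat) : Prop :=
  exists f : 'I_k -> T,
    (forall i, P (f i)) /\
    (forall i j, R (f i) (f j) -> i = j) /\
    (forall x, P x -> exists i, R x (f i)).

From mathcomp Require Import all_boot all_order all_algebra.
From mathcomp Require Import zify ring.
From Stdlib Require Import Setoid Morphisms Classical.
Set Implicit Arguments. Unset Strict Implicit. Unset Printing Implicit Defensive.
Import Order.TTheory GRing.Theory Num.Theory.
Local Open Scope ring_scope.

(* With Delta = s1 s2 s1 and rho = s1 s2, so that Delta^2 = rho^3 is
   central, every braid is Delta^(2k) times a word in Delta and rho that is reduced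
   in the free-product sense.  Under phi, Delta^2 maps to -1 and the reduced part is
   read off from the signs of the matrix entries (ping-pong in SL_2(Z)), while
   eps(Delta^2) = 6.  Hence
   (phi, eps) is injective on B_3, phi is onto SL_2(Z) by Euclid's algorithm, and two
   braids with the same image under phi have exponent sums congruent mod 12.  So the
   conjugacy classes of braids of trace t with exponent sum in a window of 12
   consecutive integers are in bijection with the SL_2(Z)-conjugacy classes of
   matrices of trace t.  Finally [[a, b], [c, d]] |-> c x^2 + (d - a) x y - b y^2
   identifies these with the classes of forms of discriminant t^2 - 4, which are
   finitely many because t^2 - 4 is not a square for t <> +-2, so that Lagrange
   reduction applies. *)

Lemma mx2E a b c d (i j : 'I_2) : mx2 a b c d i j =
  if (i == 0 :> nat) then (if (j == 0 :> nat) then a else b)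
  else (if (j == 0 :> nat) then c else d).
Proof. by rewrite mxE. Qed.

Lemma mx2_eta (M : 'M[int]_2) : M = mx2 (M 0 0) (M 0 1) (M 1 0) (M 1 1).
Proof.
apply/matrixP => i j; rewrite mx2E.
by case: i => [[|[|i]] ?] //; case: j => [[|[|j]] ?] //=; congr (M _ _); apply: val_inj.
Qed.

Lemma mx2_inj a b c d a' b' c' d' :
  mx2 a b c d = mx2 a' b' c' d' -> [/\ a = a', b = b', c = c' & d = d'].
Proof.
move=> E; have E' i j := congr1 (fun M : 'M[int]_2 => M i j) E.
by move: (E' 0 0) (E' 0 1) (E' 1 0) (E' 1 1); rewrite !mx2E.
Qed.

Lemma mul_mx2 a b c d a' b' c' d' :
  mx2 a b c d *m mx2 a' b' c' d' =
  mx2 (a * a' + b * c') (a * b' + b * d') (c * a' + d * c') (c * b' + d * d').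
Proof.
apply/matrixP => i j; rewrite !mxE !big_ord_recl big_ord0 !mx2E /=.
by case: i => [[|[|i]] ?] //; case: j => [[|[|j]] ?] //=; ring.
Qed.

Lemma scalar_mx2 (s : int) : s%:M = mx2 s 0 0 s.
Proof.
apply/matrixP => i j; rewrite !mxE.
by case: i => [[|[|i]] ?] //; case: j => [[|[|j]] ?].
Qed.

Lemma scale_mx2 (s : int) a b c d :
  s *: mx2 a b c d = mx2 (s * a) (s * b) (s * c) (s * d).
Proof.
apply/matrixP => i j; rewrite !mxE.
by case: i => [[|[|i]] ?] //; case: j => [[|[|j]] ?].
Qed.

Lemma mxtrace_mx2 a b c d : \tr (mx2 a b c d) = a + d.
Proof. by rewrite /mxtrace !big_ord_recl big_ord0 !mx2E /= addr0. Qed.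

Lemma phi_cons l w : phi (l :: w) = phi_letter l *m phi w.
Proof. by []. Qed.

Lemma phi_cat u v : phi (u ++ v) = phi u *m phi v.
Proof. by elim: u => [|l u IH] /=; rewrite ?mul1mx // IH mulmxA. Qed.

Lemma phi_sl2 w : exists a b c d, phi w = mx2 a b c d /\ a * d - b * c = 1.
Proof.
elim: w => [|l w [a [b [c [d [Hw det1]]]]]].
  by exists 1, 0, 0, 1; rewrite /= scalar_mx2.
rewrite phi_cons Hw; case: l => [[] []]; rewrite /= mul_mx2;
  by do 4 eexists; (split; [reflexivity | nia]).
Qed.

Lemma eps_cat u v : eps (u ++ v) = eps u + eps v.
Proof. by rewrite /eps big_cat. Qed.

Lemma eps_cons l w : eps (l :: w) = (if l.2 then -1 else 1) + eps w.
Proof. by rewrite /eps big_cons. Qed.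

Add Parametric Relation : word braid_eq
  reflexivity proved by beq_refl
  symmetry proved by beq_sym
  transitivity proved by beq_trans as braid_eq_rel.

#[local] Hint Resolve beq_refl : core.

Add Parametric Morphism : (@cat letter) with signature
  braid_eq ==> braid_eq ==> braid_eq as braid_eq_cat.
Proof.
move=> u u' Hu v v' Hv; apply: (beq_trans (beq_ctx [::] v Hu)).
by have := beq_ctx u' [::] Hv; rewrite !cats0.
Qed.

Lemma linvK : involutive linv.
Proof. by case=> ? []. Qed.

Lemma winvK : involutive winv.
Proof. by move=> w; rewrite /winv map_rev revK -map_comp (eq_map linvK) map_id. Qed.

Lemma winv_cat u v : winv (u ++ v) = winv v ++ winv u.
Proof. by rewrite /winv map_cat rev_cat. Qed.

Lemma braid_cat_winv u : braid_eq (u ++ winv u) [::].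
Proof.
elim: u => [|l u IH] //.
by rewrite -cat1s winv_cat -catA (catA u) IH; apply: beq_cancel.
Qed.

Lemma braid_winv_cat u : braid_eq (winv u ++ u) [::].
Proof. by rewrite -{2}(winvK u) braid_cat_winv. Qed.

Lemma eps_winv u : eps (winv u) = - eps u.
Proof.
elim: u => [|l u IH]; first by rewrite /eps big_nil oppr0.
by rewrite -cat1s winv_cat !eps_cat IH /eps !big_seq1; case: l => ? [] /=; ring.
Qed.

Lemma braid_eq_phi_eps u v : braid_eq u v -> phi u = phi v /\ eps u = eps v.
Proof.
elim=> {u v} [//|u v _ [-> ->]//|u v w _ [-> ->] _ [-> ->]//| | |].
- by move=> a b u v _ [Hp He]; rewrite !phi_cat !eps_cat Hp He.
- move=> l; rewrite eps_cons /eps !big_seq1 big_nil /= mulmx1 scalar_mx2.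
  by case: l => [[] []]; rewrite /= mul_mx2; split; congr mx2 || ring.
- by rewrite /= !mulmx1 !mul_mx2; split; [congr mx2; ring | rewrite /eps !big_cons].
Qed.

Lemma phi_winv u : phi (winv u) *m phi u = 1%:M.
Proof. by rewrite -phi_cat (braid_eq_phi_eps (braid_winv_cat u)).1. Qed.

(** * A normal form in B_3 *)

Definition Delta : word := [:: s1; s2; s1].
Definition Rho : word := [:: s1; s2].
Definition Delta2 : word := Delta ++ Delta.

Definition central (w : word) : Prop := forall v, braid_eq (w ++ v) (v ++ w).

Lemma braid_linv_cancel l : braid_eq [:: linv l; l] [::].
Proof. by rewrite -{2}(linvK l); apply: beq_cancel. Qed.

Lemma central_of_gens w :
  braid_eq (w ++ [:: s1]) (s1 :: w) -> braid_eq (w ++ [:: s2]) (s2 :: w) ->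
  central w.
Proof.
move=> w1 w2.
have pos l : ~~ l.2 -> braid_eq (w ++ [:: l]) (l :: w) by case: l => [[] []].
have wl l : braid_eq (w ++ [:: l]) (l :: w).
  case: l => g [] /=; last exact: pos.
  set l := (g, true); set l' := linv l.
  have l'l : braid_eq (l' :: w) (w ++ [:: l']) by symmetry; apply: pos.
  transitivity ([:: l] ++ (l' :: w) ++ [:: l]).
    exact: (beq_ctx [::] (w ++ [:: l]) (beq_sym (beq_cancel l))).
  by rewrite l'l -catA (_ : [:: l'] ++ _ = [:: linv l; l]) // braid_linv_cancel cats0.
elim=> [|l v IH]; first by rewrite cats0.
by rewrite -cat1s catA wl -cat1s -!catA IH.
Qed.

Lemma Delta_s1 : braid_eq (Delta ++ [:: s1]) (s2 :: Delta).
Proof. exact: (beq_ctx [::] [:: s1] beq_braid). Qed.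

Lemma Delta_s2 : braid_eq (Delta ++ [:: s2]) (s1 :: Delta).
Proof. exact: (beq_ctx [:: s1] [::] (beq_sym beq_braid)). Qed.

Lemma central_Delta2 : central Delta2.
Proof.
apply: central_of_gens; rewrite /Delta2 -catA.
- by rewrite Delta_s1 -cat1s catA Delta_s2.
- by rewrite Delta_s2 -cat1s catA Delta_s1.
Qed.

Lemma central_cat u v : central u -> central v -> central (u ++ v).
Proof. by move=> cu cv w; rewrite -catA cv catA cu catA. Qed.

Lemma central_winv u : central u -> central (winv u).
Proof.
move=> cu w; transitivity (winv u ++ (w ++ u) ++ winv u).
  by rewrite -catA braid_cat_winv cats0.
by rewrite -cu !catA braid_winv_cat.
Qed.

Lemma central_flatten_nseq n u : central u -> central (flatten (nseq n u)).
Proof.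
move=> cu; elim: n => [|n IH] /=; last exact: central_cat.
by move=> v; rewrite cats0.
Qed.

Definition Delta2pow (k : int) : word :=
  match k with
  | Posz n => flatten (nseq n Delta2)
  | Negz n => flatten (nseq n.+1 (winv Delta2))
  end.

Lemma central_Delta2pow k : central (Delta2pow k).
Proof.
case: k => n; apply: central_flatten_nseq; last apply: central_winv;
  exact: central_Delta2.
Qed.

Lemma Delta2pow_succ k : exists k', braid_eq (Delta2 ++ Delta2pow k) (Delta2pow k').
Proof.
case: k => [n|[|n]]; first by exists n.+1.
- by exists 0; rewrite (_ : Delta2pow _ = winv Delta2 ++ [::]) // cats0 braid_cat_winv.
- exists (Negz n).
  by rewrite (_ : Delta2pow _ = winv Delta2 ++ Delta2pow (Negz n)) // catA braid_cat_winv.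
Qed.

Lemma Delta2pow_pred k : exists k', braid_eq (winv Delta2 ++ Delta2pow k) (Delta2pow k').
Proof.
case: k => [[|n]|n]; last by exists (Negz n.+1).
- by exists (Negz 0).
- by exists n; rewrite (_ : Delta2pow _ = Delta2 ++ Delta2pow n) // catA braid_winv_cat.
Qed.

Definition rho_pow (e : bool) : word := if e then Rho ++ Rho else Rho.
Definition blocks (bl : seq bool) : word := flatten [seq Delta ++ rho_pow e | e <- bl].
Lemma blocks_cons e bl : blocks (e :: bl) = (Delta ++ rho_pow e) ++ blocks bl.
Proof. by []. Qed.

(* [body o bl f] is rho^o (Delta rho^e_1) ... (Delta rho^e_r) Delta^f, where [o] encodes
   rho^0, rho^1, rho^2 as [None], [Some false], [Some true] and [e] encodes rho^1, rho^2
   as [false], [true]: the free-product normal form of PSL_2(Z) = Z/2 * Z/3. *)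
Definition body (o : option bool) (bl : seq bool) (f : bool) : word :=
  (if o is Some e then rho_pow e else [::]) ++ blocks bl ++ (if f then Delta else [::]).
Definition nf (k : int) o bl f : word := Delta2pow k ++ body o bl f.

Definition has_nf (v : word) : Prop := exists k o bl f, braid_eq v (nf k o bl f).

Add Parametric Morphism : has_nf with signature braid_eq ==> iff as has_nf_braid_eq.
Proof.
by move=> u v uv; split=> -[k [o [bl [f H]]]]; exists k, o, bl, f; rewrite -H ?uv.
Qed.

Lemma has_nf_Delta2 v : has_nf v -> has_nf (Delta2 ++ v).
Proof.
move=> [k [o [bl [f ->]]]]; have [k' Hk] := Delta2pow_succ k.
by exists k', o, bl, f; rewrite /nf catA Hk.
Qed.

Lemma has_nf_Delta2_inv v : has_nf v -> has_nf (winv Delta2 ++ v).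
Proof.
move=> [k [o [bl [f ->]]]]; have [k' Hk] := Delta2pow_pred k.
by exists k', o, bl, f; rewrite /nf catA Hk.
Qed.

Lemma has_nf_shift k v : has_nf v -> has_nf (Delta2pow k ++ v).
Proof.
have iter u n : (forall w, has_nf w -> has_nf (u ++ w)) ->
    has_nf v -> has_nf (flatten (nseq n u) ++ v).
  by move=> Hu Hv; elim: n => //= n IH; rewrite -catA; apply: Hu.
by case: k => n; apply: iter; [apply: has_nf_Delta2 | apply: has_nf_Delta2_inv].
Qed.

Lemma has_nf_catl w v :
  (forall o bl f, has_nf (w ++ body o bl f)) -> has_nf v -> has_nf (w ++ v).
Proof.
move=> Hw [k [o [bl [f ->]]]].
by rewrite /nf catA -(central_Delta2pow k w) -catA; apply: has_nf_shift.
Qed.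

Lemma has_nf_body o bl f : has_nf (body o bl f).
Proof. by exists 0, o, bl, f. Qed.

Lemma Delta2_Rho3 : braid_eq Delta2 (Rho ++ Rho ++ Rho).
Proof. exact: (beq_ctx [:: s1; s2; s1] [::] beq_braid). Qed.

Lemma has_nf_Delta v : has_nf v -> has_nf (Delta ++ v).
Proof.
apply: has_nf_catl => -[e|] bl f.
  by exists 0, None, (e :: bl), f; rewrite /nf /body blocks_cons -!catA.
case: bl => [|e bl].
  case: f; last by exists 0, None, [::], true.
  by rewrite (_ : _ ++ _ = Delta2 ++ body None [::] false) //; apply/has_nf_Delta2/has_nf_body.
rewrite (_ : _ ++ _ = Delta2 ++ body (Some e) bl f); first by apply/has_nf_Delta2/has_nf_body.
by rewrite /body blocks_cons -!catA.
Qed.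

Lemma has_nf_Rho v : has_nf v -> has_nf (Rho ++ v).
Proof.
apply: has_nf_catl => -[[]|] bl f; last by exists 0, (Some false), bl, f.
  rewrite (_ : _ ++ _ = (Rho ++ Rho ++ Rho) ++ body None bl f); last by rewrite /body -!catA.
  by rewrite -Delta2_Rho3; apply/has_nf_Delta2/has_nf_body.
by exists 0, (Some true), bl, f; rewrite /nf /body -!catA.
Qed.

Definition letter_nf (l : letter) : word :=
  match l with
  | (false, false) => Rho ++ Rho ++ Delta
  | (false, true) => Delta ++ Rho
  | (true, false) => Delta ++ Rho ++ Rho
  | (true, true) => Rho ++ Delta
  end.

Lemma Delta2_letter l : braid_eq (Delta2 ++ [:: l]) (letter_nf l).
Proof.
case: l => [[] []].
- exact: (beq_trans (beq_ctx Delta [:: linv s2] beq_braid)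
                    (beq_ctx [:: s1; s2; s1; s2; s1] [::] (beq_cancel s2))).
- by [].
- exact: (beq_ctx [:: s1; s2; s1; s1; s2] [::] (beq_cancel s1)).
- exact: (beq_ctx Delta [:: s1] beq_braid).
Qed.

Lemma has_nf_all w : has_nf w.
Proof.
elim: w => [|l w IH]; first exact: (has_nf_body None [::] false).
have -> : braid_eq (l :: w) (winv Delta2 ++ letter_nf l ++ w).
  by rewrite -Delta2_letter catA (catA (winv Delta2) Delta2) braid_winv_cat.
apply: has_nf_Delta2_inv.
case: l => [[] []].
- exact: has_nf_Rho (has_nf_Delta IH).
- exact: has_nf_Delta (has_nf_Rho (has_nf_Rho IH)).
- exact: has_nf_Delta (has_nf_Rho IH).
- exact: has_nf_Rho (has_nf_Rho (has_nf_Delta IH)).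
Qed.

(** * [phi] and [eps] determine a braid *)

Lemma phi_Delta : phi Delta = mx2 0 1 (-1) 0.
Proof. by rewrite /= scalar_mx2 !mul_mx2; congr mx2; ring. Qed.

Lemma phi_Rho : phi Rho = mx2 0 1 (-1) 1.
Proof. by rewrite /= scalar_mx2 !mul_mx2; congr mx2; ring. Qed.

Lemma phi_Delta2 : phi Delta2 = (-1)%:M.
Proof. by rewrite phi_cat phi_Delta mul_mx2 scalar_mx2; congr mx2; ring. Qed.

Lemma eps_Delta2 : eps Delta2 = 6.
Proof. by rewrite /eps !big_cons big_nil. Qed.

Lemma phi_Delta2pow k : phi (Delta2pow k) = ((-1) ^+ `|k|%N)%:M.
Proof.
have phiDinv : phi (winv Delta2) = (-1)%:M.
  have : phi (winv Delta2) *m (-1)%:M = 1%:M by rewrite -phi_Delta2 phi_winv.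
  by move/(congr1 (mulmx^~ (-1)%:M)); rewrite -mulmxA -scalar_mxM mulrNN mulr1 mulmx1 mul1mx.
have pow u n : phi u = (-1)%:M -> phi (flatten (nseq n u)) = ((-1) ^+ n)%:M.
  by move=> Hu; elim: n => //= n IH; rewrite phi_cat IH Hu -scalar_mxM exprS.
by case: k => n; rewrite /Delta2pow pow ?phi_Delta2.
Qed.

Lemma eps_Delta2pow k : eps (Delta2pow k) = 6 * k.
Proof.
have pow u n : eps (flatten (nseq n u)) = n%:Z * eps u.
  by elim: n => [|n IH] /=; rewrite ?eps_cat ?IH /eps ?big_nil //; lia.
by case: k => n; rewrite /Delta2pow pow ?eps_winv eps_Delta2 ?NegzE; lia.
Qed.

Definition mxR (o : option bool) : 'M[int]_2 :=
  match o with
  | None => 1%:M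
  | Some false => mx2 0 1 (-1) 1
  | Some true => mx2 (-1) 1 (-1) 0
  end.
Definition mxS (f : bool) : 'M[int]_2 := if f then mx2 0 1 (-1) 0 else 1%:M.
Definition mxG (e : bool) : 'M[int]_2 := if e then mx2 1 0 (-1) 1 else mx2 1 (-1) 0 1.
Definition mxN (bl : seq bool) : 'M[int]_2 := foldr (fun e M => mxG e *m M) 1%:M bl.

Lemma phi_Delta_rho_pow e : phi (Delta ++ rho_pow e) = -1 *: mxG e.
Proof.
rewrite phi_cat phi_Delta; case: e; rewrite ?(phi_cat Rho Rho) phi_Rho !mul_mx2 scale_mx2;
  congr mx2; ring.
Qed.

Lemma phi_blocks bl : phi (blocks bl) = (-1) ^+ size bl *: mxN bl.
Proof.
elim: bl => [|e bl IH]; first by rewrite expr0 scale1r.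
by rewrite blocks_cons phi_cat phi_Delta_rho_pow IH -scalemxAl -scalemxAr scalerA -exprS.
Qed.

Lemma phi_nf k o bl f :
  phi (nf k o bl f) = (-1) ^+ (`|k| + size bl) *: (mxR o *m mxN bl *m mxS f).
Proof.
rewrite !phi_cat phi_Delta2pow mul_scalar_mx phi_blocks -scalemxAl -scalemxAr scalerA -exprD.
rewrite mulmxA; congr (_ *: (_ *m _ *m _)).
- case: o => [[]|]; [| exact: phi_Rho | by []].
  by rewrite (phi_cat Rho Rho) phi_Rho mul_mx2; congr mx2; ring.
- by case: f; rewrite ?phi_Delta.
Qed.

Lemma eps_nf k o bl f : eps (nf k o bl f) = 6 * k + eps (body o bl f).
Proof. by rewrite eps_cat eps_Delta2pow. Qed.

(* Conjugates by diag(1, -1) of matrices of SL_2(N). *)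
Definition sl2N_twisted (M : 'M[int]_2) : Prop :=
  exists a b c d, [/\ 0 < a, 0 <= b, 0 <= c, 0 < d & a * d - b * c = 1] /\
    M = mx2 a (- b) (- c) d.

Lemma mxN_cons e bl : exists a b c d,
  [/\ 0 < a, 0 <= b, 0 <= c, 0 < d & a * d - b * c = 1] /\
  mxN (e :: bl) = mx2 a (- b) (- c) d /\
  (if e then [/\ a <= c, b <= d & 0 < c] else [/\ c <= a, d <= b & 0 < b]).
Proof.
elim: bl e => [|e' bl IH] e.
  by case: e; [exists 1, 0, 1, 1 | exists 1, 1, 0, 1]; rewrite /= mulmx1.
have [a [b [c [d [[a0 b0 c0 d0 det1] [HN _]]]]]] := IH e'.
rewrite (_ : mxN _ = mxG e *m mxN (e' :: bl)) // HN.
by case: e; [exists a, b, (a + c), (b + d) | exists (a + c), (b + d), c, d];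
  rewrite /= mul_mx2; (split; [split; lia | split; [congr mx2; ring | split; lia]]).
Qed.

Lemma mxN_twisted bl : sl2N_twisted (mxN bl).
Proof.
case: bl => [|e bl]; first by exists 1, 0, 0, 1; rewrite /= scalar_mx2 !oppr0.
by have [a [b [c [d [H [HN _]]]]]] := mxN_cons e bl; exists a, b, c, d.
Qed.

(* The first letter of [bl] is read off from the row of [mxN bl] that dominates. *)
Lemma mxN_inj : injective mxN.
Proof.
elim=> [|e bl IH] [|e' bl'] //.
- have [a [b [c [d [[a0 b0 c0 d0 det1] [-> He]]]]]] := mxN_cons e' bl'.
  by rewrite /= scalar_mx2 => /mx2_inj[]; case: e' He => -[]; lia.
- have [a [b [c [d [[a0 b0 c0 d0 det1] [-> He]]]]]] := mxN_cons e bl.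
  by rewrite /= scalar_mx2 => /esym /mx2_inj[]; case: e He => -[]; lia.
have [a [b [c [d [[a0 b0 c0 d0 det1] [HN He]]]]]] := mxN_cons e bl.
have [a' [b' [c' [d' [[a0' b0' c0' d0' det1'] [HN' He']]]]]] := mxN_cons e' bl'.
move=> E; have eq_e : e = e'.
  move: E; rewrite HN HN' => /mx2_inj[? ? ? ?]; clear HN HN'.
  by move: He He'; case: e; case: e' => // -[? ? ?] [? ? ?]; nia.
subst e'; clear HN HN' He He'; congr cons; apply: IH.
pose Gi := if e then mx2 1 0 1 1 else mx2 1 1 0 1.
have GiG : Gi *m mxG e = 1%:M.
  by rewrite /Gi; case: (e); rewrite /= mul_mx2 scalar_mx2; congr mx2; ring.
by move: E => /(congr1 (mulmx Gi)); rewrite /= !mulmxA GiG !mul1mx.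
Qed.

(* Ping-pong: the sign pattern of the entries determines [s], [o] and [f]. *)
Lemma body_mx_inj (s s' : bool) o o' f f' M M' :
  sl2N_twisted M -> sl2N_twisted M' ->
  (-1) ^+ s *: (mxR o *m M *m mxS f) = (-1) ^+ s' *: (mxR o' *m M' *m mxS f') ->
  [/\ s = s', o = o', f = f' & M = M'].
Proof.
move=> [a [b [c [d [[? ? ? ? ?] ->]]]]] [a' [b' [c' [d' [[? ? ? ? ?] ->]]]]].
case: s; case: s'; case: o => [[]|]; case: o' => [[]|]; case: f; case: f';
  rewrite /= ?scalar_mx2 !mul_mx2 !scale_mx2 => /mx2_inj [? ? ? ?];
  first [by split=> //; congr mx2; lia | exfalso; lia].
Qed.

Lemma phi_nf_inj k o bl f k' o' bl' f' :
  phi (nf k o bl f) = phi (nf k' o' bl' f') ->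
  [/\ o = o', bl = bl', f = f' & odd `|k|%N = odd `|k'|%N].
Proof.
rewrite !phi_nf -signr_odd -[X in _ = X *: _]signr_odd => E.
have [es -> -> /mxN_inj ebl] := body_mx_inj (mxN_twisted bl) (mxN_twisted bl') E.
by split=> //; move: es; rewrite ebl !oddD => /addIb.
Qed.

Lemma braid_eq_of_phi_eps v v' : phi v = phi v' -> eps v = eps v' -> braid_eq v v'.
Proof.
have [k [o [bl [f Hv]]]] := has_nf_all v.
have [k' [o' [bl' [f' Hv']]]] := has_nf_all v'.
rewrite !(braid_eq_phi_eps Hv).1 !(braid_eq_phi_eps Hv').1.
rewrite (braid_eq_phi_eps Hv).2 (braid_eq_phi_eps Hv').2 => /phi_nf_inj[? ? ? _].
subst o' bl' f'; rewrite !eps_nf => ek.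
by rewrite Hv Hv' (_ : k = k') //; lia.
Qed.

Lemma eps_congr_of_phi v v' : phi v = phi v' -> exists q, eps v' = eps v + 12 * q.
Proof.
have [k [o [bl [f Hv]]]] := has_nf_all v.
have [k' [o' [bl' [f' Hv']]]] := has_nf_all v'.
rewrite (braid_eq_phi_eps Hv).1 (braid_eq_phi_eps Hv').1 => /phi_nf_inj[? ? ? ek].
subst o' bl' f'; exists ((k' - k) %/ 2)%Z.
by rewrite (braid_eq_phi_eps Hv).2 (braid_eq_phi_eps Hv').2 !eps_nf; lia.
Qed.

Definition sigma1pow (k : int) : word :=
  if k is Posz n then nseq n s1 else nseq `|k|%N (linv s1).

Lemma phi_sigma1pow k : phi (sigma1pow k) = mx2 1 k 0 1.
Proof.
case: k => n; elim: n => [|n IH].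
- by rewrite /= scalar_mx2.
- by rewrite phi_cons IH /= mul_mx2; congr mx2; lia.
- by rewrite /= mulmx1 NegzE.
- by rewrite phi_cons IH /= mul_mx2 !NegzE; congr mx2; lia.
Qed.

(* Euclid's algorithm on the first column. *)
Lemma phi_surj a b c d : a * d - b * c = 1 -> exists w, phi w = mx2 a b c d.
Proof.
have diag a' b' d' : a' * d' = 1 -> exists w, phi w = mx2 a' b' 0 d'.
  move=> ad; have d'_unit := intUnitRing.unitzPl ad.
  have [[-> ->]|[-> ->]] : a' = 1 /\ d' = 1 \/ a' = -1 /\ d' = -1 by nia.
  - by exists (sigma1pow b'); rewrite phi_sigma1pow.
  - exists (Delta2 ++ sigma1pow (- b')).
    by rewrite phi_cat phi_Delta2 phi_sigma1pow scalar_mx2 mul_mx2; congr mx2; ring.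
move: {2}`|c|%N (leqnn `|c|%N) => N; elim: N a b c d => [|N IH] a b c d cN det1.
  by rewrite (_ : c = 0) in det1 *; [apply: diag; lia | lia].
have [c0|c0] := eqVneq c 0; first by subst c; apply: diag; nia.
have [q [r [aE r0 rc]]] : exists q r, [/\ a = q * c + r, 0 <= r & r < `|c|].
  by exists (a %/ c)%Z, (a %% c)%Z; rewrite -divz_eq modz_ge0 // ltz_mod.
have [w2 Hw2] := IH c d (- r) (q * d - b) ltac:(lia) ltac:(nia).
exists (sigma1pow q ++ Delta2 ++ Delta ++ w2).
rewrite !phi_cat phi_sigma1pow phi_Delta Hw2 !mul_mx2.
by congr mx2; nia.
Qed.

(** * Conjugacy classes and binary quadratic forms *)

(* The roots [x/y] of [form_of_mx M] are the fixed points of the Moebius map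
   [z |-> (a z + b) / (c z + d)] of [M = [[a, b], [c, d]]]. *)
Definition form_of_mx (M : 'M[int]_2) : qform := (M 1 0, M 1 1 - M 0 0, - M 0 1).

Lemma form_of_mx2 a b c d : form_of_mx (mx2 a b c d) = (c, d - a, - b).
Proof. by rewrite /form_of_mx !mx2E. Qed.

Lemma disc_form_of_mx2 a b c d :
  disc (form_of_mx (mx2 a b c d)) = (a + d) ^+ 2 - 4 * (a * d - b * c).
Proof. by rewrite form_of_mx2 /disc /qa /qb /qc /=; ring. Qed.

Lemma form_of_mx_inj M M' : \tr M = \tr M' -> form_of_mx M = form_of_mx M' -> M = M'.
Proof.
rewrite (mx2_eta M) (mx2_eta M') !mxtrace_mx2 !form_of_mx2 => ? [? ? ?].
by congr mx2; lia.
Qed.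

Lemma form_of_mx_conj al be ga de M :
  form_of_mx (mx2 de (- be) (- ga) al *m M *m mx2 al be ga de) =
  qact al be ga de (form_of_mx M).
Proof.
by rewrite (mx2_eta M) !mul_mx2 !form_of_mx2 /qact /qa /qb /qc /=; congr (_, _, _); ring.
Qed.

Lemma form_of_trace_mx t f : disc f = t ^+ 2 - 4 ->
  exists a b c d, [/\ form_of_mx (mx2 a b c d) = f, a + d = t & a * d - b * c = 1].
Proof.
case: f => [[a b] c]; rewrite /disc /qa /qb /qc /= => Df.
have [h tbE] : exists h, t - b = 2 * h.
  by exists ((t - b) %/ 2)%Z; move: Df; rewrite !expr2; nia.
exists h, (- c), a, (t - h); rewrite form_of_mx2; split; [congr (_, _, _) | | ]; nia.
Qed.

Lemma qact_comp al be ga de al' be' ga' de' f :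
  qact al be ga de (qact al' be' ga' de' f) =
  qact (al' * al + be' * ga) (al' * be + be' * de) (ga' * al + de' * ga)
       (ga' * be + de' * de) f.
Proof. by case: f => [[a b] c]; rewrite /qact /qa /qb /qc /=; congr (_, _, _); ring. Qed.

Lemma qact1 f : qact 1 0 0 1 f = f.
Proof. by case: f => [[a b] c]; rewrite /qact /qa /qb /qc /=; congr (_, _, _); ring. Qed.

Lemma disc_qact al be ga de f :
  disc (qact al be ga de f) = (al * de - be * ga) ^+ 2 * disc f.
Proof. by case: f => [[a b] c]; rewrite /disc /qact /qa /qb /qc /=; ring. Qed.

Lemma form_equiv_refl f : form_equiv f f.
Proof. by exists 1, 0, 0, 1; rewrite qact1; split=> //; ring. Qed.

Lemma form_equiv_sym f g : form_equiv f g -> form_equiv g f.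
Proof.
move=> [al [be [ga [de [det1 <-]]]]]; exists de, (- be), (- ga), al.
rewrite qact_comp; split; first lia.
by rewrite -[RHS]qact1; congr (qact _ _ _ _ _); lia.
Qed.

Lemma form_equiv_trans f g h : form_equiv f g -> form_equiv g h -> form_equiv f h.
Proof.
move=> [al [be [ga [de [det1 <-]]]]] [al' [be' [ga' [de' [det1' <-]]]]].
by rewrite qact_comp; do 4 eexists; split; last reflexivity; nia.
Qed.

Lemma phi_cat_winv u : phi u *m phi (winv u) = 1%:M.
Proof. by rewrite -{1}(winvK u) phi_winv. Qed.

Lemma mx2_inv_unique A al be ga de : al * de - be * ga = 1 ->
  A *m mx2 al be ga de = 1%:M -> A = mx2 de (- be) (- ga) al.
Proof.
move=> det1 AP; have PP' : mx2 al be ga de *m mx2 de (- be) (- ga) al = 1%:M.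
  by rewrite mul_mx2 scalar_mx2; congr mx2; lia.
by rewrite -[A]mulmx1 -PP' mulmxA AP mul1mx.
Qed.

Lemma form_equiv_of_braid_conj u v :
  braid_conj u v -> form_equiv (form_of_mx (phi u)) (form_of_mx (phi v)).
Proof.
move=> [c /braid_eq_phi_eps[<- _]].
have [al [be [ga [de [Pc det1]]]]] := phi_sl2 (winv c).
have Pc' := mx2_inv_unique det1 (etrans (congr1 _ (esym Pc)) (phi_cat_winv c)).
exists al, be, ga, de; split=> //.
by rewrite !phi_cat Pc Pc' mulmxA form_of_mx_conj.
Qed.

Lemma conj_of_form_equiv u v :
  form_equiv (form_of_mx (phi u)) (form_of_mx (phi v)) -> \tr (phi u) = \tr (phi v) ->
  exists c, phi (c ++ u ++ winv c) = phi v.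
Proof.
move=> [al [be [ga [de [det1 Ef]]]]] Etr; have [c Pc] := phi_surj det1.
have Pc' := mx2_inv_unique det1 (etrans (congr1 _ (esym Pc)) (phi_winv c)).
exists (winv c); rewrite winvK !phi_cat mulmxA.
apply: form_of_mx_inj; last by rewrite Pc Pc' form_of_mx_conj.
by rewrite mxtrace_mulC mulmxA phi_cat_winv mul1mx.
Qed.

Lemma braid_conj_of_form_equiv u v :
  form_equiv (form_of_mx (phi u)) (form_of_mx (phi v)) -> \tr (phi u) = \tr (phi v) ->
  eps u = eps v -> braid_conj u v.
Proof.
move=> Ef Etr Eeps; have [c Pc] := conj_of_form_equiv Ef Etr.
exists c; apply: braid_eq_of_phi_eps => //.
by rewrite !eps_cat eps_winv -Eeps; ring.
Qed.

Lemma eps_congr_of_form_equiv u v :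
  form_equiv (form_of_mx (phi u)) (form_of_mx (phi v)) -> \tr (phi u) = \tr (phi v) ->
  exists q, eps v = eps u + 12 * q.
Proof.
move=> Ef Etr; have [c /eps_congr_of_phi[q ->]] := conj_of_form_equiv Ef Etr.
by exists q; rewrite !eps_cat eps_winv; ring.
Qed.

(* Representatives are picked greedily along [S]; deciding whether an element is
   new requires excluded middle. *)
Lemma num_classes_of_cover (T : eqType) (P : T -> Prop) (R : T -> T -> Prop) (S : seq T) :
  (forall x y, R x y -> R y x) -> (forall x y z, R x y -> R y z -> R x z) ->
  (forall x, P x -> exists y, [/\ y \in S, P y & R x y]) ->
  exists k, num_classes P R k.
Proof.
move=> Rsym Rtrans; elim: S P => [|y S IH] P cover.
  have f0 : 'I_0 -> T by case.
  by exists 0%N, f0; split; [case | split; [case | move=> x /cover[? []]]].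
have [Py|nPy] := classic (P y); last first.
  apply: IH => x /cover[z [/predU1P[->|zS] Pz xz]]; first by [].
  by exists z.
pose P' x := P x /\ ~ R x y.
have [k [f [P'f [finj fsurj]]]] : exists k, num_classes P' R k.
  apply: IH => x [Px nxy]; have [z [/predU1P[zy|zS] Pz xz]] := cover x Px.
    by rewrite zy in xz.
  by exists z; split=> //; split=> // zy; apply: nxy (Rtrans _ _ _ xz zy).
pose g (i : 'I_(k + 1)) := if split i is inl j then f j else y.
exists (k + 1)%N, g; split; [|split].
- by move=> i; rewrite /g; case: split => [j|_] //; case: (P'f j).
- move=> i i'; rewrite -[i]splitK -[i']splitK /g !unsplitK.
  case: (split i) => [j|[[|//] ?]]; case: (split i') => [j'|[[|//] ?]].
  + by move/finj ->.
  + by move=> fy; case: (P'f j).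
  + by move=> /Rsym yf; case: (P'f j').
  + by move=> _; congr (unsplit (inr _)); apply: val_inj.
- move=> x Px; have [xy|nxy] := classic (R x y).
    by exists (unsplit (inr ord0)); rewrite /g unsplitK.
  by have [j xf] := fsurj x (conj Px nxy); exists (unsplit (inl j)); rewrite /g unsplitK.
Qed.

Section ClassPartition.

Variables (T U : Type) (m : nat) (P : 'I_m -> T -> Prop) (R : T -> T -> Prop).
Variables (Q : U -> Prop) (S : U -> U -> Prop) (F : T -> U).
Hypothesis S_sym : forall u v, S u v -> S v u.
Hypothesis S_trans : forall u v w, S u v -> S v w -> S u w.
Hypothesis P_Q : forall j x, P j x -> Q (F x).
Hypothesis R_S : forall x y, R x y -> S (F x) (F y).
Hypothesis S_R : forall j x y, P j x -> P j y -> S (F x) (F y) -> R x y.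
Hypothesis S_index : forall j j' x y, P j x -> P j' y -> S (F x) (F y) -> j = j'.
Hypothesis Q_P : forall u, Q u -> exists j x, P j x /\ S u (F x).

Lemma num_classes_partition h : num_classes Q S h ->
  exists k : 'I_m -> nat, (forall j, num_classes (P j) R (k j)) /\ (\sum_(j < m) k j)%N = h.
Proof.
move=> [g [Qg [ginj gsurj]]].
have choice i : exists p : 'I_m * T, P p.1 p.2 /\ S (g i) (F p.2).
  by have [j [x ?]] := Q_P (Qg i); exists (j, x).
have [p Hp] := fin_all_exists choice.
pose A j := [set i | (p i).1 == j].
exists (fun j => #|A j|); split.
  move=> j; exists (fun r => (p (enum_val r)).2); split; [|split].
  - move=> r; have := enum_valP r; rewrite inE => /eqP ej.
    by have := (Hp (enum_val r)).1; rewrite ej.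
  - move=> r r' /R_S Sxy; apply/enum_val_inj/ginj.
    exact: S_trans (Hp _).2 (S_trans Sxy (S_sym (Hp _).2)).
  - move=> y Py; have [i Syg] := gsurj _ (P_Q Py).
    have Sy := S_trans Syg (Hp i).2; have ji := S_index Py (Hp i).1 Sy.
    have Ai : i \in A j by rewrite inE ji.
    exists (enum_rank_in Ai i); rewrite enum_rankK_in //.
    by apply: S_R Py _ Sy; rewrite ji; case: (Hp i).
transitivity #|'I_h|; last exact: card_ord.
rewrite -sum1_card (partition_big (fun i => (p i).1) xpredT) //=.
by apply: eq_bigr => j _; rewrite -sum1_card; apply: eq_bigl => i; rewrite inE.
Qed.

End ClassPartition.

(** * Finiteness of the class number *)

Lemma sqr_neq_sqr_sub4 (t b : int) : t != 2 -> t != -2 -> b ^+ 2 != t ^+ 2 - 4.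
Proof.
move=> t2 tN2; apply/eqP.
rewrite -(real_normK (num_real b)) -(real_normK (num_real t)) !expr2.
have : `|t| != 2 by lia.
have := normr_ge0 b; have := normr_ge0 t.
move: `|b| `|t| => B T T0 B0 T2 E.
have BT : B < T by nia.
have : T <= 2 by nia.
have : 2 <= T by nia.
lia.
Qed.

Definition box (N : nat) : seq int := [seq i%:Z - N%:Z | i <- iota 0 N.*2.+1].

Lemma mem_box N (z : int) : `|z| <= N%:Z -> z \in box N.
Proof.
move=> zN; apply/mapP; exists (absz (z + N%:Z)); last lia.
by rewrite mem_iota; lia.
Qed.

Lemma shift_mod_2a (b a : int) : a != 0 -> exists k, `|b + 2 * a * k| <= `|a|.
Proof.
move=> a0; have [q [r [bE r0 ra]]] : exists q r, [/\ b = q * (2 * a) + r, 0 <= r & r < `|2 * a|].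
  by exists (b %/ (2 * a))%Z, (b %% (2 * a))%Z; rewrite -divz_eq modz_ge0 ?ltz_mod //; lia.
have [|] := lerP r `|a|; first by exists (- q); lia.
by have [] := ltrP 0 a; [exists (- q - 1) | exists (- q + 1)]; lia.
Qed.

Section ReducedForms.

Variable D : int.
Hypothesis D_nonsquare : forall b : int, b ^+ 2 != D.

Lemma qa_neq0 f : disc f = D -> qa f != 0.
Proof.
move=> Df; apply: contraNneq (D_nonsquare (qb f)) => a0.
by rewrite -Df /disc a0 mulr0 mul0r subr0.
Qed.

(* Lagrange reduction: translate [b] into [[-|a|, |a|]], then swap [a] and [c] if
   [|c| < |a|]; this decreases [|a|], which stays positive as [D] is not a square. *)
Lemma exists_reduced_form f : disc f = D -> exists g,
  [/\ form_equiv f g, disc g = D, `|qb g| <= `|qa g| & `|qa g| <= `|qc g|].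
Proof.
move: {2}`|qa f|%N (leqnn `|qa f|%N) => N; elim: N f => [|N IH] f aN Df.
  by have := qa_neq0 Df; lia.
have [k bk] := shift_mod_2a (qb f) (qa_neq0 Df).
pose f1 := qact 1 k 0 1 f.
have ef1 : form_equiv f f1 by exists 1, k, 0, 1; split=> //; ring.
have Df1 : disc f1 = D by rewrite disc_qact Df; ring.
have [ac|ca] := lerP `|qa f1| `|qc f1|.
  exists f1; split=> //; move: bk; rewrite /f1 /qact /qa /qb /=.
  by congr (_ <= _); congr `|_|; ring.
pose f2 := qact 0 1 (-1) 0 f1.
have ef2 : form_equiv f1 f2 by exists 0, 1, (-1), 0; split=> //; ring.
have Df2 : disc f2 = D by rewrite disc_qact Df1; ring.
have [|g [eg Dg bg ag]] := IH f2 _ Df2.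
  by move: ca aN; rewrite /f2 /f1 /qact /qa /qc /=; lia.
by exists g; split=> //; apply: form_equiv_trans ef1 (form_equiv_trans ef2 eg).
Qed.

(* [4 |a c| <= |D| + b^2 <= |D| + |a c|] *)
Lemma reduced_form_bounded (a b c : int) : a != 0 -> `|b| <= `|a| -> `|a| <= `|c| ->
  `|c| <= `|b ^+ 2 - 4 * a * c|.
Proof.
move=> a0 ba ac; have := ler_normB (b ^+ 2) (b ^+ 2 - 4 * a * c).
rewrite (_ : _ - (_ - _) = 4 * a * c); last by ring.
rewrite normrX !normrM (ger0_norm (_ : 0 <= 4)) //.
have := normr_ge0 b; nia.
Qed.

Lemma class_number_finite : exists h, num_classes (fun f => disc f = D) form_equiv h.
Proof.
pose cube := [seq (ab, c) | ab <- [seq (a, b) | a <- box `|D|, b <- box `|D|], c <- box `|D|].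
apply: (num_classes_of_cover (S := cube) form_equiv_sym form_equiv_trans) => f Df.
have [[[a b] c] [ef Dg ba ac]] := exists_reduced_form Df.
exists (a, b, c); split=> //; rewrite /qa /qb /qc /= in ba ac Dg.
have a0 : a != 0 by apply: (qa_neq0 Dg).
have cD : `|c| <= `|D|%N by rewrite abszE -Dg /disc /qa /qb /qc /= reduced_form_bounded.
by rewrite !allpairs_f // mem_box //; lia.
Qed.

End ReducedForms.

(** * Windows of exponent sums *)

Lemma disc_form_of_phi w : disc (form_of_mx (phi w)) = \tr (phi w) ^+ 2 - 4.
Proof.
have [a [b [c [d [-> det1]]]]] := phi_sl2 w.
by rewrite disc_form_of_mx2 mxtrace_mx2 det1 mulr1.
Qed.

(* Append a power of Delta^4, which is trivial under [phi] and has exponent sum 12. *)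
Lemma shift_eps_window w (n : int) :
  exists (j : 'I_12) w', phi w' = phi w /\ eps w' = n + (j : nat)%:Z.
Proof.
pose q := ((eps w - n) %/ 12)%Z; pose r := ((eps w - n) %% 12)%Z.
have r0 : 0 <= r by rewrite modz_ge0.
have r12 : (absz r < 12)%N by have := @ltz_mod (eps w - n) 12 isT; lia.
exists (Ordinal r12), (w ++ Delta2pow (- 2 * q)); split.
  by rewrite phi_cat phi_Delta2pow -signr_odd (_ : odd _ = false) ?expr0 ?mulmx1 //; lia.
have := divz_eq (eps w - n) 12; rewrite eps_cat eps_Delta2pow /= -/q -/r; lia.
Qed.

Lemma disc_of_Xpred t e w : Xpred t e w -> disc (form_of_mx (phi w)) = t ^+ 2 - 4.
Proof. by move=> [trw _]; rewrite disc_form_of_phi trw. Qed.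

Lemma braid_conj_of_Xpred t e u v : Xpred t e u -> Xpred t e v ->
  form_equiv (form_of_mx (phi u)) (form_of_mx (phi v)) -> braid_conj u v.
Proof.
by move=> [tru epsu] [trv epsv] /braid_conj_of_form_equiv; apply; rewrite ?tru ?trv ?epsu.
Qed.

Lemma Xpred_window_index t n (j j' : 'I_12) u v :
  Xpred t (n + (j : nat)%:Z) u -> Xpred t (n + (j' : nat)%:Z) v ->
  form_equiv (form_of_mx (phi u)) (form_of_mx (phi v)) -> j = j'.
Proof.
move=> [tru epsu] [trv epsv] /eps_congr_of_form_equiv[|q]; first by rewrite tru trv.
by rewrite epsu epsv => Eq; apply: ord_inj; have := ltn_ord j; have := ltn_ord j'; lia.
Qed.

Lemma exists_Xpred_window t n f : disc f = t ^+ 2 - 4 ->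
  exists (j : 'I_12) w, Xpred t (n + (j : nat)%:Z) w /\ form_equiv f (form_of_mx (phi w)).
Proof.
move=> Df; have [a [b [c [d [<- tr_t det1]]]]] := form_of_trace_mx Df.
have [w Pw] := phi_surj det1; have [j [w' [Pw' epsw']]] := shift_eps_window w n.
by exists j, w'; rewrite /Xpred Pw' Pw mxtrace_mx2; split=> //; apply: form_equiv_refl.
Qed.

Theorem lemma3p1 (t n : int) :
  t != 2 -> t != -2 ->
  exists k : 'I_12 -> nat,
    (forall j : 'I_12,
        num_classes (Xpred t (n + (j : nat)%:Z)) braid_conj (k j)) /\
    num_classes (fun f : qform => disc f = t ^+ 2 - 4) form_equiv
      (\sum_(j < 12) k j)%N.
Proof.
move=> t2 tN2; have [h Hh] := class_number_finite (fun b => sqr_neq_sqr_sub4 b t2 tN2).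
have [k [Hk sumk]] := num_classes_partition (P := fun j : 'I_12 => Xpred t (n + (j : nat)%:Z))
  form_equiv_sym form_equiv_trans (fun j => @disc_of_Xpred t _) form_equiv_of_braid_conj
  (fun j => @braid_conj_of_Xpred t _) (@Xpred_window_index t n) (@exists_Xpred_window t n) Hh.
by exists k; rewrite sumk.
Qed.
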